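(* (Equivalence theorem for bounded approximate designs.) Let $\nu_1,\ldots,\nu_N$ and $\mu_1,\ldots,\mu_N$ be real numbers with $0\le \nu_i<\mu_i$ for all $i$, $\sum_{i=1}^N\nu_i\le 1$ and $\sum_{i=1}^N\mu_i\ge 1$. Let $\Xi$ be the set of all designs $\xi=\{(\boldsymbol{x}_i,w_i): i=1,\ldots,N\}$ with $\nu_i\le w_i\le\mu_i$ for all $i$ and $\sum_{i=1}^N w_i=1$. Let $\Phi\in\Lambda$ and let $\xi^*=\{(\boldsymbol{x}_i,w_i)\}\in\Xi$ with $\Phi(\xi^* )<\infty$. Then the following are equivalent: (I) $\xi^*$ is $\Phi$-optimal in $\Xi$, i.e. $\Phi(\xi^* )=\min_{\xi\in\Xi}\Phi(\xi)$. (II) There is a partition $\mathcal{X}=\mathcal{X}_1\cup\mathcal{X}_2\cup\mathcal{X}_3$ of the point set $\mathcal{X}=\{\boldsymbol{x}_1,\ldots,\boldsymbol{x}_N\}$ such that (a) $w_i=\nu_i$ for $\boldsymbol{x}_i\in\mathcal{X}_1$ and $w_i=\mu_i$ for $\boldsymbol{x}_i\in\mathcal{X}_3$; (b) if $\mathcal{X}_2=\emptyset$, then $\max_{\boldsymbol{x}_i\in\mathcal{X}_3}F_\Phi(\xi^*;\boldsymbol{x}_i)\le\min_{\boldsymbol{x}_i\in\mathcal{X}_1}F_\Phi(\xi^*;\boldsymbol{x}_i)$; (c) if $\mathcal{X}_2\neq\emptyset$, then there is a real number $s$ such that for every $\boldsymbol{x}_i\in\mathcal{X}_2$: (i) $\nu_i<w_i<\mu_i$;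 (ii) $F_\Phi(\xi^*;\boldsymbol{x}_i)=s$; and (iii) $\max_{\boldsymbol{x}_j\in\mathcal{X}_3}F_\Phi(\xi^*;\boldsymbol{x}_j)\le s\le\min_{\boldsymbol{x}_j\in\mathcal{X}_1}F_\Phi(\xi^*;\boldsymbol{x}_j)$. (Here a maximum over the empty set is $-\infty$ and a minimum over the empty set is $+\infty$.)
   Context: Setting: $N$ points $\boldsymbol{x}_1,\ldots,\boldsymbol{x}_N$ (treated as distinct by index) forming the design space $\mathcal{X}$, each with a symmetric positive semidefinite $p_1\times p_1$ information matrix $I_{\boldsymbol\theta}(\boldsymbol{x}_i)$. An (approximate) design is $\xi=\{(\boldsymbol{x}_i,w_i)\}$ with $w_i\ge0$, $\sum_i w_i=1$; its information matrix is $M(\xi)=\sum_i w_i I_{\boldsymbol\theta}(\boldsymbol{x}_i)$, and a criterion $\Phi$ is a function of $M(\xi)$ (taking value $+\infty$ when undefined, e.g. at singular $M$), written $\Phi(\xi)$; designs are added/scaled through their weight vectors. Directional derivative: $F_\Phi(\xi,\eta)=\lim_{\alpha\downarrow0}\frac{\Phi((1-\alpha)\xi+\alpha\eta)-\Phi(\xi)}{\alpha}$, and $F_\Phi(\xi;\boldsymbol{x}_i)=F_\Phi(\xi,\delta_{\boldsymbol{x}_i})$ where $\delta_{\boldsymbol{x}_i}$ is the design putting weight 1 on $\boldsymbol{x}_i$. The class $\Lambda$ consists of criteria $\Phi$ that are convex (as functions of the weight vector) and linearly differentiable, meaning that at every design $\xi$ with $\Phi(\xi)<\infty$ and every design $\eta=\{(\boldsymbol{x}_i,\lambda_i)\}$,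 $F_\Phi(\xi,\eta)$ exists and equals $\sum_i\lambda_iF_\Phi(\xi;\boldsymbol{x}_i)$; moreover for designs $\xi_1,\xi_2,\xi_3$, $\gamma\mapsto\Phi(\xi_1+\gamma(\xi_2-\xi_3))$ is infinitely differentiable on the set of $\gamma>0$ for which this is a design. Examples: $D$-optimality $\Phi=\log\det(M^{-1})$, $A$-optimality $\Phi=\mathrm{Tr}(M^{-1})$. *)

From HB Require Import structures.
From mathcomp Require Import all_boot all_order all_algebra.
From mathcomp Require Import all_classical all_reals all_analysis.
Set Implicit Arguments. Unset Strict Implicit. Unset Printing Implicit Defensive.
Import Order.TTheory GRing.Theory Num.Theory.
Import numFieldNormedType.Exports.
Local Open Scope ring_scope.
Local Open Scope classical_set_scope.

Section Designs.
Variables (R : realType) (N p : nat).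

Definition psd_sym (A : 'M[R]_p) : Prop :=
  A^T = A /\ forall v : 'cV[R]_p, 0 <= (v^T *m A *m v) ord0 ord0.

(* an approximate design on the points x_1..x_N, given by its weight vector *)
Definition is_design (w : 'I_N -> R) : Prop :=
  (forall i, 0 <= w i) /\ \sum_i w i = 1.

Definition delta (i : 'I_N) : 'I_N -> R := fun j => if j == i then 1 else 0.

Definition comb (a : R) (w v : 'I_N -> R) : 'I_N -> R :=
  fun i => (1 - a) * w i + a * v i.

Definition infomat (info : 'I_N -> 'M[R]_p) (w : 'I_N -> R) : 'M[R]_p :=
  \sum_i w i *: info i.

Definition phiW (info : 'I_N -> 'M[R]_p) (Phi : 'M[R]_p -> \bar R)
  (w : 'I_N -> R) : \bar R := Phi (infomat info w).

Definition diffq info Phi (w v : 'I_N -> R) (a : R) : \bar R :=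
  ((phiW info Phi (comb a w v) - phiW info Phi w) * (a^-1)%:E)%E.

Definition is_dir_deriv info Phi (w v : 'I_N -> R) (l : R) : Prop :=
  diffq info Phi w v @ at_right 0 --> l%:E.

Definition FPhi info Phi (w : 'I_N -> R) (i : 'I_N) : R :=
  fine (lim (diffq info Phi w (delta i) @ at_right 0)).

Definition in_Lambda (info : 'I_N -> 'M[R]_p) (Phi : 'M[R]_p -> \bar R) : Prop :=
  (forall w, is_design w -> phiW info Phi w != -oo%E) /\
  (forall w v a, is_design w -> is_design v -> 0 <= a <= 1 ->
     (phiW info Phi (comb a w v)
        <= (1 - a)%:E * phiW info Phi w + a%:E * phiW info Phi v)%E) /\
  (forall w v, is_design w -> (phiW info Phi w < +oo)%E -> is_design v ->
     is_dir_deriv info Phi w v (\sum_i v i * FPhi info Phi w i)) /\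
  (forall w1 w2 w3, is_design w1 -> is_design w2 -> is_design w3 ->
     let g := fun gam : R => phiW info Phi (fun i => w1 i + gam * (w2 i - w3 i)) in
     forall gam0 : R,
       (\forall gam \near gam0,
          0 < gam /\ is_design (fun i => w1 i + gam * (w2 i - w3 i))
          /\ (g gam < +oo)%E) ->
       forall n : nat, derivable (derive1n n (fun gam => fine (g gam))) gam0 1).

Definition in_Xi (nu mu : 'I_N -> R) (w : 'I_N -> R) : Prop :=
  is_design w /\ forall i, nu i <= w i <= mu i.

End Designs.

(* Convexity and linear differentiability reduce optimality of [w] over the
   polytope Xi to the first-order condition [0 <= \sum_k (v k - w k) F k] for
   every [v] in Xi, where [F] collects the directional derivatives towards the
   one-point designs.  Minimising this linear form over a box-constrained
   simplex is a fractional knapsack problem: [w] solves it exactly when no mass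
   can be moved profitably, i.e. when the points below their upper bound
   [mu] carry no larger derivative than the points above their lower bound
   [nu]; grouping the points by which bounds are attained gives the partition. *)
From HB Require Import structures.
From mathcomp Require Import all_boot all_order all_algebra.
From mathcomp Require Import all_classical all_reals all_analysis.
From mathcomp Require Import ring lra.
Set Implicit Arguments. Unset Strict Implicit. Unset Printing Implicit Defensive.
Import Order.TTheory GRing.Theory Num.Theory.
Local Open Scope ring_scope.

Section LimitsAtRight0.
Local Open Scope classical_set_scope.

Lemma cvg_at_right0_lb (R : realType) (f : R -> \bar R) (l x : R) :
  f @ 0^'+ --> l%:E -> (forall a, 0 < a <= 1 -> (x%:E <= f a)%E) -> x <= l.
Proof.
move=> hf hx; rewrite -lee_fin; apply: (cvge_to_ge hf).
near=> a; apply: hx; apply/andP; split.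
  by near: a; exact: nbhs_right_gt.
by apply/ltW; near: a; exact: nbhs_right_lt.
Unshelve. all: by end_near. Qed.

Lemma cvg_at_right0_ub (R : realType) (f : R -> \bar R) (l x : R) :
  f @ 0^'+ --> l%:E -> (forall a, 0 < a <= 1 -> (f a <= x%:E)%E) -> l <= x.
Proof.
move=> hf hx; rewrite -lee_fin; apply: (cvge_to_le hf).
near=> a; apply: hx; apply/andP; split.
  by near: a; exact: nbhs_right_gt.
by apply/ltW; near: a; exact: nbhs_right_lt.
Unshelve. all: by end_near. Qed.

End LimitsAtRight0.

Section BoundedDesigns.
Variables (R : realType) (N : nat).
Implicit Types (nu mu w v d F : 'I_N -> R).

Lemma is_design_comb w v a :
  is_design w -> is_design v -> 0 <= a <= 1 -> is_design (comb a w v).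
Proof.
move=> [w0 w1] [v0 v1] /andP[a0 a1].
have a1' : 0 <= 1 - a by rewrite subr_ge0.
split=> [i|]; first by rewrite /comb addr_ge0 // mulr_ge0.
by rewrite /comb big_split /= -!mulr_sumr w1 v1 !mulr1 subrK.
Qed.

Lemma in_Xi_comb nu mu w v a :
  in_Xi nu mu w -> in_Xi nu mu v -> 0 <= a <= 1 -> in_Xi nu mu (comb a w v).
Proof.
move=> [dw wb] [dv vb] a01; split; first exact: is_design_comb.
move: a01 => /andP[a0 a1] i; rewrite /comb.
have /andP[l1 u1] := wb i; have /andP[l2 u2] := vb i.
have e x : x = (1 - a) * x + a * x by rewrite mulrBl mul1r subrK.
have a1' : 0 <= 1 - a by rewrite subr_ge0.
by rewrite [nu i]e [mu i]e !lerD // ler_wpM2l.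
Qed.

Definition first_order_optimal nu mu w F : Prop :=
  forall v, in_Xi nu mu v -> 0 <= \sum_k (v k - w k) * F k.

Definition optimal_partition nu mu w F (X1 X2 X3 : {set 'I_N}) : Prop :=
  [/\ (X1 :|: X2 :|: X3 = [set: 'I_N] /\
       [/\ [disjoint X1 & X2], [disjoint X1 & X3] & [disjoint X2 & X3]]),
      (forall i, i \in X1 -> w i = nu i) /\ (forall i, i \in X3 -> w i = mu i),
      (X2 = finset.set0 -> forall i j, i \in X3 -> j \in X1 -> F i <= F j) &
      (X2 != finset.set0 -> exists s : R, forall i, i \in X2 ->
         [/\ nu i < w i < mu i, F i = s,
             (forall j, j \in X3 -> F j <= s) &
             (forall j, j \in X1 -> s <= F j)])].

(* Moving mass [e] from [i] to [j] changes the linear form by [e (F j - F i)]. *)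
Lemma first_order_transfer nu mu w F :
  (forall i, 0 <= nu i) -> in_Xi nu mu w -> first_order_optimal nu mu w F ->
  forall i j, i != j -> nu i < w i -> w j < mu j -> F i <= F j.
Proof.
move=> hnu0 [[w0 w1] wb] hopt i j ij hi hj.
pose e := Num.min (w i - nu i) (mu j - w j).
have e0 : 0 < e by rewrite lt_min !subr_gt0 hi hj.
have ei : e <= w i - nu i by rewrite ge_min lexx.
have ej : e <= mu j - w j by rewrite ge_min lexx orbT.
pose u k : R := (if k == j then e else 0) - (if k == i then e else 0).
have sum_pt (c : R) (l : 'I_N) : \sum_k (if k == l then c else 0) = c.
  by rewrite -big_mkcond big_pred1_eq.
have hv : in_Xi nu mu (fun k => w k + u k).
  split; first split.
  - move=> k; move: (wb k) (hnu0 k) (w0 k); rewrite /u.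
    by case: eqP => [->|_]; case: eqP => [->|_] => /andP[? _]; lra.
  - by rewrite big_split /= sumrB !sum_pt w1 subrr addr0.
  move=> k; have /andP[l1 u1] := wb k; rewrite /u.
  case: eqP => [kj|_]; case: eqP => [ki|_]; first by move: ij; rewrite -kj -ki eqxx.
  + by rewrite -kj in ej; apply/andP; split; lra.
  + by rewrite -ki in ei; apply/andP; split; lra.
  + by rewrite subr0 addr0 l1 u1.
have := hopt _ hv.
have -> : \sum_k (w k + u k - w k) * F k = e * F j - e * F i.
  rewrite -(sum_pt (e * F j) j) -(sum_pt (e * F i) i) -sumrB.
  apply: eq_bigr => k _; rewrite addrAC subrr add0r /u.
  by case: eqP => [->|_]; case: eqP => [->|_]; ring.
by rewrite subr_ge0 (ler_pM2l e0).
Qed.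

Lemma partition_of_first_order nu mu w F :
  (forall i, 0 <= nu i) -> (forall i, nu i < mu i) ->
  in_Xi nu mu w -> first_order_optimal nu mu w F ->
  exists X1 X2 X3, optimal_partition nu mu w F X1 X2 X3.
Proof.
move=> hnu0 hnumu hw hopt; have tr := first_order_transfer hnu0 hw hopt.
have hb i : nu i <= w i <= mu i := hw.2 i.
have nu_neq_mu i : w i = nu i -> w i != mu i.
  by move=> ->; rewrite lt_eqF.
exists [set i | w i == nu i], [set i | (nu i < w i) && (w i < mu i)],
       [set i | w i == mu i]; split.
- split.
  + apply/setP => i; rewrite !inE; have /andP[l u] := hb i.
    case: (eqVneq (w i) (nu i)) => //= h1.
    case: (eqVneq (w i) (mu i)) => h2; first by rewrite orbT.
    by rewrite orbF !lt_def h1 l eq_sym h2 u.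
  + split; apply/pred0P => i /=; rewrite !inE; apply/negbTE/negP => /andP[].
    * by move=> /eqP-> /andP[]; rewrite ltxx.
    * by move=> /eqP /nu_neq_mu /negP.
    * by move=> /andP[_ h] /eqP e; move: h; rewrite e ltxx.
- by split => i; rewrite inE => /eqP.
- move=> _ i j; rewrite !inE => /eqP hi /eqP hj; apply: tr.
  + by apply/eqP => ij; move: (nu_neq_mu j hj); rewrite -ij hi eqxx.
  + by rewrite hi hnumu.
  + by rewrite hj hnumu.
- move=> /set0Pn[k]; rewrite inE => /andP[k1 k2]; exists (F k) => i.
  rewrite inE => /andP[i1 i2]; split.
  + by rewrite i1 i2.
  + case: (eqVneq i k) => [->//|ik].
    by apply/eqP; rewrite eq_le !tr // eq_sym.
  + move=> j; rewrite inE => /eqP hj; apply: (tr j k) => //; last by rewrite hj hnumu.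
    by apply/eqP => jk; move: k2; rewrite -jk hj ltxx.
  + move=> j; rewrite inE => /eqP hj; apply: (tr k j) => //; last by rewrite hj hnumu.
    by apply/eqP => kj; move: k1; rewrite kj hj ltxx.
Qed.

Lemma sumr_mul_ge0_level d F s : \sum_i d i = 0 ->
  (forall i, 0 <= d i * (F i - s)) -> 0 <= \sum_i d i * F i.
Proof.
move=> hd hi.
have -> : \sum_i d i * F i = \sum_i d i * (F i - s) + s * \sum_i d i.
  rewrite mulr_sumr -big_split /=; apply: eq_bigr => i _.
  by rewrite mulrBr [s * _]mulrC subrK.
by rewrite hd mulr0 addr0 sumr_ge0.
Qed.

(* A level [s] separating the derivatives on [X3], [X2] and [X1] certifies
   the first-order condition: each term [(v k - w k) (F k - s)] is [>= 0]. *)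
Lemma first_order_of_level nu mu w F (X1 X2 X3 : {set 'I_N}) s :
  in_Xi nu mu w -> X1 :|: X2 :|: X3 = [set: 'I_N] ->
  (forall i, i \in X1 -> w i = nu i) -> (forall i, i \in X3 -> w i = mu i) ->
  (forall i, i \in X1 -> s <= F i) -> (forall i, i \in X2 -> F i = s) ->
  (forall i, i \in X3 -> F i <= s) ->
  first_order_optimal nu mu w F.
Proof.
move=> [[_ w1] _] hcov h1 h3 s1 s2 s3 v [[_ v1] vb].
apply: (@sumr_mul_ge0_level _ _ s); first by rewrite sumrB v1 w1 subrr.
move=> i; have : i \in [set: 'I_N] by rewrite inE.
rewrite -hcov !inE => /orP[/orP[hi|hi]|hi].
- apply: mulr_ge0; last by rewrite subr_ge0 s1.
  by rewrite subr_ge0 h1 //; case/andP: (vb i).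
- by rewrite s2 // subrr mulr0.
- apply: mulr_le0; last by rewrite subr_le0 s3.
  by rewrite subr_le0 h3 //; case/andP: (vb i).
Qed.

Lemma first_order_of_partition nu mu w F (X1 X2 X3 : {set 'I_N}) :
  in_Xi nu mu w -> optimal_partition nu mu w F X1 X2 X3 ->
  first_order_optimal nu mu w F.
Proof.
move=> hw [[hcov _] [h1 h3] hempty hlevel].
have [X2e|/[dup] X2n /set0Pn[k hk]] := eqVneq X2 finset.set0.
  pose M := \big[Order.max/0]_(i in X3) F i.
  pose s := \big[Order.min/M]_(j in X1) F j.
  apply: (@first_order_of_level _ _ _ _ X1 X2 X3 s) => //.
  - by move=> j hj; apply: bigmin_le_cond.
  - by move=> i; rewrite X2e inE.
  - move=> i hi; apply: le_bigmin; first exact: le_bigmax_cond.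
    by move=> j hj; apply: hempty.
have [s hs] := hlevel X2n; have [_ _ s3 s1] := hs k hk.
apply: (@first_order_of_level _ _ _ _ X1 X2 X3 s) => //.
by move=> i /hs[].
Qed.

End BoundedDesigns.

Section FirstOrderOptimality.
Variables (R : realType) (N p : nat) (info : 'I_N -> 'M[R]_p).
Variable Phi : 'M[R]_p -> \bar R.
Hypothesis hPhi : in_Lambda info Phi.
Variable w : 'I_N -> R.
Hypotheses (hw : is_design w) (hfin : (phiW info Phi w < +oo)%E).

Let F := FPhi info Phi w.

Lemma phiW_design_fin : exists c, phiW info Phi w = c%:E.
Proof.
have [hnm _] := hPhi.
by move: (hnm w hw) hfin; case: (phiW info Phi w) => // c _ _; exists c.
Qed.

(* The derivative towards [w] itself vanishes, so the derivative towards [v]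
   is the centred form [\sum_k (v k - w k) F k]. *)
Lemma sum_design_FPhi_eq0 : \sum_i w i * F i = 0.
Proof.
have [_ [_ [hdd _]]] := hPhi; have [c hc] := phiW_design_fin.
have hd := hdd w w hw hfin hw.
have diffq0 a : diffq info Phi w w a = 0%E.
  rewrite /diffq; have -> : comb a w w = w.
    by apply/funext => i; rewrite /comb mulrBl mul1r subrK.
  by rewrite hc subee ?mul0e.
apply/eqP; rewrite eq_le (cvg_at_right0_ub hd) ?(cvg_at_right0_lb hd) //.
  by move=> a _; rewrite diffq0.
by move=> a _; rewrite diffq0.
Qed.

Lemma dir_deriv_FPhi v :
  is_design v -> is_dir_deriv info Phi w v (\sum_k (v k - w k) * F k).
Proof.
have [_ [_ [hdd _]]] := hPhi => hv.
suff -> : \sum_k (v k - w k) * F k = \sum_k v k * F k by exact: hdd.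
under eq_bigr do rewrite mulrBl.
by rewrite sumrB sum_design_FPhi_eq0 subr0.
Qed.

Lemma first_order_of_min nu mu :
  in_Xi nu mu w ->
  (forall v, in_Xi nu mu v -> (phiW info Phi w <= phiW info Phi v)%E) ->
  first_order_optimal nu mu w F.
Proof.
move=> hwX hmin v hv; have [c hc] := phiW_design_fin.
apply: (cvg_at_right0_lb (dir_deriv_FPhi hv.1)) => a /andP[a0 a1].
rewrite /diffq hc; apply: mule_ge0; last by rewrite lee_fin invr_ge0 ltW.
have hcomb : in_Xi nu mu (comb a w v) by apply: in_Xi_comb => //; rewrite ltW.
by rewrite sube_ge0 ?orbT // -hc; exact: hmin.
Qed.

(* Convexity bounds every difference quotient by [Phi v - Phi w]. *)
Lemma min_of_first_order v :
  is_design v -> 0 <= \sum_k (v k - w k) * F k ->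
  (phiW info Phi w <= phiW info Phi v)%E.
Proof.
move=> hv hF; have [hnm [hconv _]] := hPhi; have [c hc] := phiW_design_fin.
case hpv: (phiW info Phi v) => [d| |]; last 2 first.
- by rewrite leey.
- by move: (hnm v hv); rewrite hpv.
rewrite hc lee_fin -subr_ge0; apply: (le_trans hF).
apply: (cvg_at_right0_ub (dir_deriv_FPhi hv)) => a /andP[a0 a1].
have a01 : 0 <= a <= 1 by rewrite ltW.
have := hconv w v a hw hv a01; rewrite hc hpv.
move: (hnm _ (is_design_comb hw hv a01)); rewrite /diffq hc.
case: (phiW info Phi (comb a w v)) => [e| |] // _.
rewrite -!EFinM -EFinD !lee_fin ler_pdivrMr // => he.
have -> : (d - c) * a = (1 - a) * c + a * d - c by ring.
by rewrite lerD2r.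
Qed.

End FirstOrderOptimality.

Theorem theorem2 (R : realType) (N p : nat)
  (info : 'I_N -> 'M[R]_p) (hinfo : forall i, psd_sym (info i))
  (nu mu : 'I_N -> R)
  (hnu0 : forall i, 0 <= nu i) (hnumu : forall i, nu i < mu i)
  (hsnu : \sum_i nu i <= 1) (hsmu : 1 <= \sum_i mu i)
  (Phi : 'M[R]_p -> \bar R) (hPhi : in_Lambda info Phi)
  (w : 'I_N -> R) (hw : in_Xi nu mu w) (hfin : (phiW info Phi w < +oo)%E) :
  (forall v, in_Xi nu mu v -> (phiW info Phi w <= phiW info Phi v)%E)
  <->
  (exists X1 X2 X3 : {set 'I_N},
     [/\ (X1 :|: X2 :|: X3 = [set: 'I_N] /\
          [/\ [disjoint X1 & X2], [disjoint X1 & X3] & [disjoint X2 & X3]]),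
         (forall i, i \in X1 -> w i = nu i) /\ (forall i, i \in X3 -> w i = mu i),
         (X2 = finset.set0 -> forall i j, i \in X3 -> j \in X1 ->
            FPhi info Phi w i <= FPhi info Phi w j) &
         (X2 != finset.set0 -> exists s : R, forall i, i \in X2 ->
            [/\ nu i < w i < mu i,
                FPhi info Phi w i = s,
                (forall j, j \in X3 -> FPhi info Phi w j <= s) &
                (forall j, j \in X1 -> s <= FPhi info Phi w j)])]).
Proof.
have [dw _] := hw.
split=> [hmin | [X1 [X2 [X3 hpart]]] v [dv vb]].
  have [X1 [X2 [X3 hpart]]] := partition_of_first_order hnu0 hnumu hw
    (first_order_of_min hPhi dw hfin hw hmin).
  by exists X1, X2, X3.
apply: min_of_first_order => //.
exact: first_order_of_partition hw hpart v (conj dv vb).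
Qed.
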